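(* Let $0<f_1\le\dots\le f_n$ be opening costs depending on $n$, $\kappa=\max\{i\in[n]: f_i<1/(i-1)\}$ and $F_\kappa=\sum_{i=1}^\kappa f_i$. Suppose that $F_\kappa\in O(\ln(n))$ and set $m:=2n-1$. Then for sufficiently large $n$, $$F_\kappa+\int_{F_\kappa}^\infty\sqrt{1-\left(1-e^{-(x-F_\kappa)}\right)^{n-1}}\,\mathrm{d}x\le 2\sqrt{em}.$$
   Context: In the definition of $\kappa$, $1/(i-1)$ for $i=1$ is interpreted as $+\infty$. Asymptotic notation refers to $n\to\infty$. *)

From HB Require Import structures.
From mathcomp Require Import all_boot all_order all_algebra.
From mathcomp Require Import all_classical all_reals all_analysis.
Set Implicit Arguments. Unset Strict Implicit. Unset Printing Implicit Defensive.
Import Order.TTheory GRing.Theory Num.Theory.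
Local Open Scope ring_scope.

(* Opening costs f_1,...,f_n are given as a function [f : nat -> R] indexed
   from 1 (values f 0 and f i for i > n are irrelevant). *)

(* kappa = max { i in [n] : f_i < 1/(i-1) }, where 1/(i-1) = +oo for i = 1,
   so i = 1 always qualifies (for n >= 1). *)
Definition kappa (R : realType) (n : nat) (f : nat -> R) : nat :=
  (\max_(1 <= i < n.+1 | (i == 1)%N || (f i < 1 / (i.-1)%:R)%R) i)%N.

Definition Fkappa (R : realType) (n : nat) (f : nat -> R) : R :=
  \sum_(1 <= i < (kappa n f).+1) f i.

From HB Require Import structures.
From mathcomp Require Import all_boot all_order all_algebra.
From mathcomp Require Import all_classical all_reals all_analysis.
From mathcomp Require Import measurable_realfun.
From mathcomp.algebra_tactics Require Import ring lra.
From mathcomp Require Import zify.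
Import Order.TTheory GRing.Theory Num.Theory.
Import numFieldTopology.Exports.
Local Open Scope ring_scope.
Local Open Scope classical_set_scope.

(* Only the growth hypothesis on F_kappa matters: as ln n < 4 n^(1/4), it gives
   F_kappa <= sqrt n for large n.  Bernoulli's inequality 1 - (1 - t)^k <= k t
   bounds the integrand by sqrt k * e^(-(x - F)/2), whose integral over
   [F, +oo[ is 2 sqrt k.  With k = n - 1 the left-hand side is thus at most
   3 sqrt n <= 2 sqrt (e (2n - 1)). *)

Section tail_integral.
Context {R : realType}.
Implicit Types (a c K x y : R) (k : nat).

Lemma bernoulli_le k (t : R) : 0 <= t <= 1 -> 1 - (1 - t) ^+ k <= k%:R * t.
Proof.
case/andP=> t0 t1; elim: k => [|k IHk]; first by rewrite expr0 subrr mul0r.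
rewrite exprSr -natr1.
have onem_ge0 : 0 <= 1 - t by lra.
have : 1 - k%:R * t <= (1 - t) ^+ k by lra.
move=> /(ler_wpM2r onem_ge0).
have : 0 <= k%:R * t * t by rewrite !mulr_ge0.
nra.
Qed.

Lemma is_derive_expR_affine c a x :
  is_derive x 1 (fun y => expR (- c * (y - a))) (- c * expR (- c * (x - a))).
Proof.
rewrite mulrC; apply: is_derive1_comp.
have -> : (fun y => - c * (y - a)) = - c *: (id - cst a) by apply/funext.
by apply: is_derive_eq; rewrite subr0 scaler1.
Qed.

Lemma continuous_mul_expR_affine K c a :
  continuous (fun y => K * expR (- c * (y - a))).
Proof.
move=> x; apply: (@continuousM _ R (fun=> K) (fun y => expR (- c * (y - a)))).
  exact: cst_continuous.
apply: continuous_comp; last exact: continuous_expR.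
apply: continuousM; first exact: cst_continuous.
by apply: continuousB => //; exact: cst_continuous.
Qed.

Lemma cvgy_expR_affine c a : 0 < c -> expR (- c * (x - a)) @[x --> +oo] --> 0.
Proof.
move=> c0.
have -> : (fun x => expR (- c * (x - a))) = (fun z => expR (- z)) \o (fun x => c * (x - a)).
  by apply/funext => x /=; rewrite mulNr.
apply: (@cvg_comp _ _ _ _ _ _ (pinfty_nbhs R)); last exact: cvgr_expR.
apply: gt0_cvgMry => //.
apply/cvgryPge => A; near=> x; rewrite lerBrDr.
by near: x; apply: nbhs_pinfty_ge; exact: num_real.
Unshelve. all: by end_near.
Qed.

Lemma integral_expR_tail K c a : 0 <= K -> 0 < c ->
  (\int[lebesgue_measure]_(x in `[a, +oo[) (K * expR (- c * (x - a)))%:E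
     = (K / c)%:E)%E.
Proof.
move=> K0 c0.
rewrite (@ge0_continuous_FTC2y _ _ (fun x => - (K / c) * expR (- c * (x - a))) _ 0).
- by rewrite subrr mulr0 expR0 mulr1 EFinN sub0e oppeK.
- by move=> x _; rewrite mulr_ge0 ?expR_ge0.
- apply: continuous_subspaceT; exact: continuous_mul_expR_affine.
- rewrite -(mulr0 (- (K / c))); apply: cvgMr; exact: cvgy_expR_affine.
- by move=> x _; apply: derivableM.
- apply: cvg_at_right_filter; exact: continuous_mul_expR_affine.
- move=> x _; rewrite derive1E deriveM// derive_cst scaler0 addr0.
  case: (is_derive_expR_affine c a x) => _ ->; rewrite /GRing.scale /=.
  by field; rewrite gt_eqF.
Qed.

Lemma sqrt_onem_onemX_le k y : 0 <= y ->
  Num.sqrt (1 - (1 - expR (- y)) ^+ k) <= Num.sqrt k%:R * expR (- 2^-1 * y).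
Proof.
move=> y0; set u := expR (- 2^-1 * y).
have uE : expR (- y) = u ^+ 2 by rewrite /u -expRM_natl; congr expR; field.
have u2_01 : 0 <= u ^+ 2 <= 1 by rewrite -uE expR_ge0 expR_le1 oppr_le0.
apply: (@le_trans _ _ (Num.sqrt (k%:R * u ^+ 2))).
  by rewrite ler_wsqrtr// uE bernoulli_le.
by rewrite sqrtrM// sqrtr_sqr ger0_norm ?expR_ge0.
Qed.

Lemma continuous_sqrt_onem_onemX a k :
  continuous (fun x => Num.sqrt (1 - (1 - expR (- (x - a))) ^+ k)).
Proof.
move=> x; apply: continuous_comp; last exact: sqrt_continuous.
apply: (@continuousB _ R _ (fun=> 1)); first exact: cst_continuous.
apply: (@continuous_comp _ _ _ (fun x => 1 - expR (- (x - a))) (fun y => y ^+ k)).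
  apply: (@continuousB _ R _ (fun=> 1)); first exact: cst_continuous.
  apply: continuous_comp; last exact: continuous_expR.
  by apply: continuousN; apply: continuousB => //; exact: cst_continuous.
exact: exprn_continuous.
Qed.

Lemma integral_sqrt_onem_onemX_le a k :
  (\int[lebesgue_measure]_(x in `[a, +oo[)
      (Num.sqrt (1 - (1 - expR (- (x - a))) ^+ k))%:E
    <= (2 * Num.sqrt k%:R)%:E)%E.
Proof.
have -> : 2 * Num.sqrt k%:R = Num.sqrt k%:R / 2^-1 :> R by field.
rewrite -(@integral_expR_tail (Num.sqrt k%:R) 2^-1 a)//.
apply: ge0_le_integral => //.
- apply/measurable_EFinP; apply: measurable_funTS.
  exact: continuous_measurable_fun (continuous_sqrt_onem_onemX a k).
- apply/measurable_EFinP; apply: measurable_funTS.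
  exact: continuous_measurable_fun (continuous_mul_expR_affine _ _ _).
- move=> x; rewrite /= in_itv /= andbT => ax.
  by rewrite lee_fin sqrt_onem_onemX_le// subr_ge0.
Qed.

End tail_integral.

Section growth_bounds.
Context {R : realType}.

Lemma ln_lt_4sqrt_sqrt (x : R) : 0 < x -> ln x < 4 * Num.sqrt (Num.sqrt x).
Proof.
move=> x0; set q := Num.sqrt (Num.sqrt x).
have q0 : 0 < q by rewrite !sqrtr_gt0.
have -> : x = q ^+ 4.
  by rewrite (_ : 4 = 2 * 2)%N// exprM !sqr_sqrtr ?sqrtr_ge0 ?ltW.
by rewrite lnXn// -[_ *+ 4]mulr_natl ltr_pM2l// ln_sublinear.
Qed.

Lemma eventually_ln_le_sqrt (C : R) :
  \forall n \near \oo, C * `|ln (n%:R : R)| <= Num.sqrt n%:R.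
Proof.
near=> n.
have n_big : (4 * `|C|) ^+ 4 < n%:R :> R by near: n; exact: nbhs_infty_gtr.
have n_gt0 : (0 : R) < n%:R by apply: le_lt_trans n_big; rewrite exprn_ge0.
set q := Num.sqrt (Num.sqrt (n%:R : R)).
have q0 : 0 <= q by rewrite sqrtr_ge0.
have q2 : q ^+ 2 = Num.sqrt n%:R by rewrite sqr_sqrtr ?sqrtr_ge0.
have q4 : q ^+ 4 = n%:R by rewrite (_ : 4 = 2 * 2)%N// exprM q2 sqr_sqrtr ?ltW.
have Cq : 4 * `|C| <= q by rewrite -(@ler_pXn2r _ 4)// ?nnegrE ?mulr_ge0// q4 ltW.
have ln_n_ge0 : 0 <= ln (n%:R : R) by rewrite ln_ge0// ler1n -(ltr0n R).
have lnq := ln_lt_4sqrt_sqrt _ n_gt0.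
rewrite -q2 ger0_norm//.
apply: (le_trans (ler_wpM2r ln_n_ge0 (ler_norm C))).
apply: (le_trans (ler_wpM2l (normr_ge0 C) (ltW lnq))).
by rewrite expr2 mulrA (mulrC `|C|) ler_wpM2r.
Unshelve. all: by end_near.
Qed.

Lemma add_two_sqrt_predn_le (n : nat) (F : R) : (2 <= n)%N ->
  F <= Num.sqrt n%:R ->
  F + 2 * Num.sqrt (n - 1)%:R <= 2 * Num.sqrt (expR 1 * (2 * n - 1)%:R).
Proof.
move=> n2 Fn.
have sqrt_pred : Num.sqrt (n - 1)%:R <= Num.sqrt (n%:R : R).
  by rewrite ler_wsqrtr// ler_nat leq_subr.
suff : 3 * Num.sqrt (n%:R : R) <= 2 * Num.sqrt (expR 1 * (2 * n - 1)%:R) by lra.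
have e2 : 2 <= expR (1 : R) by have := expR_ge1Dx (1 : R); lra.
have n2R : 2 <= n%:R :> R by rewrite ler_nat.
rewrite -(@ler_pXn2r _ 2)// ?nnegrE ?mulr_ge0 ?sqrtr_ge0//.
rewrite !exprMn !sqr_sqrtr ?mulr_ge0 ?expR_ge0// natrB ?natrM; last by lia.
have : 0 <= (expR 1 - 2) * (2 * n%:R - 1) :> R by apply: mulr_ge0; lra.
rewrite !expr2; nra.
Qed.

End growth_bounds.

Theorem lemma11 (R : realType) (f : nat -> nat -> R)
  (hpos : forall n i, (1 <= i <= n)%N -> 0 < f n i)
  (hmono : forall n i, (1 <= i < n)%N -> f n i <= f n i.+1)
  (hO : exists (C : R) (N : nat), forall n, (N <= n)%N ->
          `|Fkappa n (f n)| <= C * `|ln (n%:R : R)|) :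
  exists N : nat, forall n, (N <= n)%N ->
    let F := Fkappa n (f n) in
    let m : R := (2 * n - 1)%:R in
    (F%:E + \int[lebesgue_measure]_(x in `[F, +oo[)
        (Num.sqrt (1 - (1 - expR (- (x - F))) ^+ (n - 1)))%:E <=
      (2 * Num.sqrt (expR 1 * m))%:E)%E.
Proof.
case: hO => C [N HC].
have [N' _ lnC] := eventually_ln_le_sqrt C.
exists (maxn (maxn N N') 2) => n; rewrite !geq_max => /andP[/andP[nN nN'] n2] /=.
have F_le : Fkappa n (f n) <= Num.sqrt n%:R.
  exact: le_trans (ler_norm _) (le_trans (HC n nN) (lnC n nN')).
apply: le_trans (leeD (lexx _) (integral_sqrt_onem_onemX_le _ (n - 1))) _.
by rewrite -EFinD lee_fin add_two_sqrt_predn_le.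
Qed.
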